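(* For every positive integer $l$, the set of all positive eigenvalues of the adjacency matrix of the double subdivided star $T_{l,l}$, with any one of them removed, is linearly independent over $\mathbb{Q}$.
   Context: A subdivided star $SK_{1,l}$ is obtained by identifying exactly one pendant (end) vertex from each of $l$ copies of the path $P_3$; the identified vertex is the coalescence vertex. The double subdivided star $T_{l,m}$ is obtained from $SK_{1,l}$ and $SK_{1,m}$ by adding one edge joining their two coalescence vertices. *)

From HB Require Import structures.
From mathcomp Require Import all_boot all_order all_algebra all_field.
Set Implicit Arguments. Unset Strict Implicit. Unset Printing Implicit Defensive.
Import Order.TTheory GRing.Theory Num.Theory.
Local Open Scope ring_scope.

(* Vertex numbering of the double subdivided star T_{l,m}
   (2l + 2m + 2 vertices, indexed by 'I_(2*l+2*m+2)):
   - 0 : coalescence vertex of SK_{1,l};  1 : coalescence vertex of SK_{1,m};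
   - 2+2k, 3+2k (k < l)       : middle and end vertex of the k-th P_3 of SK_{1,l};
   - 2+2l+2k, 3+2l+2k (k < m) : middle and end vertex of the k-th P_3 of SK_{1,m}.
   Edges: 0-1 (the added edge), 0-(2+2k), (2+2k)-(3+2k),
          1-(2+2l+2k), (2+2l+2k)-(3+2l+2k). *)
Definition tedge_dir (l m i j : nat) : bool :=
  [|| (i == 0%N) && (j == 1%N),
      [&& i == 0%N, (2 <= j < 2 + 2 * l)%N & ~~ odd j],
      [&& (2 <= i < 2 + 2 * l)%N, ~~ odd i & j == i.+1],
      [&& i == 1%N, (2 + 2 * l <= j < 2 + 2 * l + 2 * m)%N & ~~ odd j]
    | [&& (2 + 2 * l <= i < 2 + 2 * l + 2 * m)%N, ~~ odd i & j == i.+1]].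

Definition tedge (l m i j : nat) : bool := tedge_dir l m i j || tedge_dir l m j i.

Definition Tadj (l m : nat) : 'M[algC]_(2 * l + 2 * m + 2) :=
  \matrix_(i, j) (tedge l m i j)%:R.

Definition pos_eigenvalue (n : nat) (A : 'M[algC]_n) (x : algC) : bool :=
  eigenvalue A x && (0 < x).

Definition Q_lin_indep (P : pred algC) : Prop :=
  forall (s : seq algC) (c : algC -> rat),
    uniq s -> (forall x, x \in s -> P x) ->
    \sum_(x <- s) ratr (c x) * x = 0 ->
    forall x, x \in s -> c x = 0.

(* An eigenvector of T_{l,l} for the eigenvalue x is determined by its values
   h0, h1 at the two coalescence vertices: along each arm the end value e
   satisfies (x^2 - 1) e = h for the hub value h, so summing over the l arms
   of a star gives (x^2 - 1) h' + l x h = (x^2 - 1) x h, h' being the value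
   at the other hub.  Adding and subtracting the two hub equations shows that
   x is a root of (x^2 - 1) p(x) p(-x), where p(x) = x^3 - x^2 - (l + 1) x + 1.
   Hence every positive eigenvalue is 1 or |r| = +-r for a root r of p.
   Since +-1 are not roots, p has no rational root, hence is irreducible over
   Q: 1, r, r^2 are Q-independent, and so are 1, r, s for distinct roots r, s.
   With r1 + r2 + r3 = 1, every rational relation between 1, |r1|, |r2|, |r3|
   is then a multiple of 1 = +-|r1| +-|r2| +-|r3|, in which all four numbers
   occur; deleting any one of them leaves a Q-independent set. *)

From mathcomp Require Import all_boot all_order all_algebra all_field.
From mathcomp Require Import zify ring lra.
Import GRing.Theory Num.Theory.

Set Implicit Arguments.
Unset Strict Implicit.
Unset Printing Implicit Defensive.

Local Open Scope ring_scope.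

(** * Rational cubics *)

Definition cubic {R : pzRingType} (a b c x : R) : R := x ^+ 3 + a * x ^+ 2 + b * x + c.

Lemma cubic_Vieta (F : closedFieldType) (a b c : F) : exists r1 r2 r3 : F,
  [/\ a = - (r1 + r2 + r3), b = r1 * r2 + r1 * r3 + r2 * r3 & c = - (r1 * r2 * r3)].
Proof.
have [r1 r1E] := @solve_monicpoly F 3 (nth 0 [:: - c; - b; - a]) isT.
have r1_root : r1 ^+ 3 + a * r1 ^+ 2 + b * r1 + c = 0.
  by move: r1E; rewrite !big_ord_recr big_ord0 /= => ->; rewrite -[(1 + 1)%R]/2%N; ring.
pose q := b + a * r1 + r1 ^+ 2.
have [r2 r2E] := @solve_monicpoly F 2 (nth 0 [:: - q; - (a + r1)]) isT.
have r2_root : r2 ^+ 2 + (a + r1) * r2 + q = 0.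
  by move: r2E; rewrite !big_ord_recr big_ord0 /= => ->; ring.
exists r1, r2, (- a - r1 - r2); split; first by ring.
- by apply/eqP; rewrite -subr_eq0 -r2_root /q; apply/eqP; ring.
- apply/eqP; rewrite -subr_eq0; apply/eqP.
  transitivity (r1 ^+ 3 + a * r1 ^+ 2 + b * r1 + c - r1 * (r2 ^+ 2 + (a + r1) * r2 + q)).
    by rewrite /q; ring.
  by rewrite r1_root r2_root mulr0 subr0.
Qed.

Lemma Crat_affine_eq0 (x u v : algC) : x \notin Crat -> u \in Crat -> v \in Crat ->
  u + v * x = 0 -> u = 0 /\ v = 0.
Proof.
move=> xQ uQ vQ uvx; have [v0 | vnz] := eqVneq v 0.
  by move: uvx; rewrite v0 mul0r addr0.
case/negP: xQ; suff -> : x = - u / v by rewrite rpred_div ?rpredN.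
have vx : v * x = - u by apply/eqP; rewrite -addr_eq0 addrC uvx.
by rewrite -vx [v * x]mulrC mulfK.
Qed.

Lemma Crat_sqr_add_add1_neq0 (u : algC) : u \in Crat -> u ^+ 2 + u + 1 != 0.
Proof.
case/CratP => q ->; rewrite -rmorphXn -(rmorph1 ratr) -!rmorphD fmorph_eq0.
by apply/lt0r_neq0; nra.
Qed.

(* [Num.sg x * x] stands for |x|: it is +-x even for non-real x, which spares
   proving that the roots of the cubic are real. *)
Lemma sgr_mul_eq (R : numDomainType) (x y : R) : x != 0 -> y != 0 ->
  Num.sg x * x = Num.sg y * y -> x = y \/ x = - y.
Proof.
move=> xnz ynz; rewrite -(neqr0_sign xnz) -(neqr0_sign ynz).
case: (x < 0); case: (y < 0); rewrite ?expr0 ?expr1 ?mul1r ?mulN1r => e.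
- by left; apply: oppr_inj.
- by right; rewrite -e opprK.
- by right.
- by left.
Qed.

Section RationalCubic.

Variables a b c : algC.
Hypotheses (aQ : a \in Crat) (bQ : b \in Crat) (cQ : c \in Crat).
Hypothesis no_Crat_root : forall t, t \in Crat -> cubic a b c t != 0.

Lemma cubic_root_notCrat (x : algC) : cubic a b c x = 0 -> x \notin Crat.
Proof. by move=> px; apply/negP => /no_Crat_root; rewrite px eqxx. Qed.

Lemma cubic_root_Crat_indep (x u v w : algC) : cubic a b c x = 0 ->
  u \in Crat -> v \in Crat -> w \in Crat ->
  u + v * x + w * x ^+ 2 = 0 -> [/\ u = 0, v = 0 & w = 0].
Proof.
move=> px uQ vQ wQ rel; have xQ := cubic_root_notCrat px.
have [w0 | wnz] := eqVneq w 0.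
  by move: rel; rewrite w0 mul0r addr0 => /(Crat_affine_eq0 xQ uQ vQ) [].
pose A := u / w; pose B := v / w.
have monic_rel : x ^+ 2 + B * x + A = 0.
  by apply: (mulfI wnz); rewrite mulr0 -[RHS]rel /A /B; field.
(* Euclidean division of the cubic by the quadratic [t^2 + B t + A]. *)
pose e := b - A - a * B + B ^+ 2; pose f := c - (a - B) * A.
have divE t : cubic a b c t = (t + a - B) * (t ^+ 2 + B * t + A) + (f + e * t).
  by rewrite /cubic /e /f; ring.
have AQ : A \in Crat by rewrite rpred_div.
have BQ : B \in Crat by rewrite rpred_div.
clearbody A B.
have eQ : e \in Crat by rewrite /e !(rpredD, rpredN, rpredM, rpredX).
have fQ : f \in Crat by rewrite /f !(rpredD, rpredN, rpredM).
have [f0 e0] : f = 0 /\ e = 0.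
  apply: Crat_affine_eq0 xQ fQ eQ _.
  by move: (divE x); rewrite px monic_rel mulr0 add0r => <-.
have /eqP[] := no_Crat_root (rpredB BQ aQ).
by rewrite divE e0 f0 mul0r addr0; ring.
Qed.

Lemma cubic_roots_Crat_indep (x y u v w : algC) :
  cubic a b c x = 0 -> cubic a b c y = 0 -> x != y ->
  u \in Crat -> v \in Crat -> w \in Crat ->
  u + v * x + w * y = 0 -> [/\ u = 0, v = 0 & w = 0].
Proof.
move=> px py xy uQ vQ wQ rel; have xQ := cubic_root_notCrat px.
have [w0 | wnz] := eqVneq w 0.
  by move: rel; rewrite w0 mul0r addr0 => /(Crat_affine_eq0 xQ uQ vQ) [].
pose A := - u / w; pose B := - v / w.
have AQ : A \in Crat by rewrite rpred_div ?rpredN.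
have BQ : B \in Crat by rewrite rpred_div ?rpredN.
have yE : y = A + B * x.
  have wy : w * y = - (u + v * x) by rewrite -[LHS](addKr (u + v * x)) rel addr0.
  by apply: (mulfI wnz); rewrite wy /A /B; field.
clearbody A B.
(* [(cubic x - cubic y) / (x - y)] vanishes; substituting [y = A + B x]
   leaves a rational quadratic relation for [x] with leading coefficient
   [B^2 + B + 1]. *)
have quot : (A ^+ 2 + a * A + b) + (A + 2 * A * B + a + a * B) * x
            + (B ^+ 2 + B + 1) * x ^+ 2 = 0.
  have xy0 : x - y != 0 by rewrite subr_eq0.
  apply: (mulfI xy0); rewrite mulr0 -[RHS](subrr 0) -{1}px -py /cubic.
  by rewrite yE; ring.
have [||| _ _ /eqP] := cubic_root_Crat_indep px _ _ _ quot.
- by rewrite !(rpredD, rpredM, rpredX).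
- by rewrite !(rpredD, rpredM, rpred_nat).
- by rewrite !(rpredD, rpredX, rpred1).
by rewrite (negbTE (Crat_sqr_add_add1_neq0 BQ)).
Qed.

Lemma cubic_root_simple (r s t : algC) : cubic a b c r = 0 ->
  r + s + t = - a -> r * s + r * t + s * t = b -> r != s.
Proof.
move=> pr e1 e2; apply/eqP => rs; subst s.
have tE : t = - a - 2 * r by rewrite -e1; ring.
have rel : - b + (- 2 * a) * r + (- 3) * r ^+ 2 = 0 by rewrite -e2 tE; ring.
have [||| _ _ /eqP] := cubic_root_Crat_indep pr _ _ _ rel.
- by rewrite rpredN.
- by rewrite rpredM ?rpredN ?rpred_nat.
- by rewrite rpredN rpred_nat.
by rewrite oppr_eq0 pnatr_eq0.
Qed.

Lemma cubic_root_opp (r : algC) : cubic a b c r = 0 -> cubic a b c (- r) != 0.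
Proof.
move=> pr; apply/eqP => pNr.
have rel : 2 * c + 0 * r + 2 * a * r ^+ 2 = 0.
  transitivity (cubic a b c r + cubic a b c (- r)); first by rewrite /cubic; ring.
  by rewrite pr pNr addr0.
have [||| /eqP c0 _ _] := cubic_root_Crat_indep pr _ _ _ rel.
- by rewrite rpredM ?rpred_nat.
- exact: rpred0.
- by rewrite !rpredM ?rpred_nat.
have /eqP[] := no_Crat_root (rpred0 _).
move: c0; rewrite mulf_eq0 pnatr_eq0 /= => /eqP c0.
by rewrite /cubic c0; ring.
Qed.

Lemma cubic_root_neq0 (r : algC) : cubic a b c r = 0 -> r != 0.
Proof. by move/cubic_root_notCrat; apply: contraNneq => ->; apply: rpred0. Qed.

Lemma sgr_cubic_root_neq1 (r : algC) : cubic a b c r = 0 -> Num.sg r * r != 1.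
Proof.
move=> pr; apply/eqP => r1E.
have [|] : r = 1 \/ r = -1.
  by apply: sgr_mul_eq; rewrite ?(cubic_root_neq0 pr) ?oner_neq0 // sgr1 mulr1.
all: by move=> rE; have := cubic_root_notCrat pr; rewrite rE ?rpredN rpred1.
Qed.

Lemma sgr_cubic_roots_neq (r s : algC) : cubic a b c r = 0 -> cubic a b c s = 0 ->
  r != s -> Num.sg r * r != Num.sg s * s.
Proof.
move=> pr ps rs; apply/eqP => e.
have [rsE|rE] : r = s \/ r = - s.
  by apply: sgr_mul_eq; rewrite ?(cubic_root_neq0 pr) ?(cubic_root_neq0 ps).
- by rewrite rsE eqxx in rs.
- by have /eqP[] := cubic_root_opp ps; rewrite -rE.
Qed.

Variables r1 r2 r3 : algC.
Hypotheses (Va : a = - (r1 + r2 + r3)) (Vb : b = r1 * r2 + r1 * r3 + r2 * r3)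
  (Vc : c = - (r1 * r2 * r3)).

Lemma cubic_Vieta_factor t : cubic a b c t = (t - r1) * (t - r2) * (t - r3).
Proof. by rewrite /cubic Va Vb Vc; ring. Qed.

Lemma cubic_Vieta_roots :
  [/\ cubic a b c r1 = 0, cubic a b c r2 = 0 & cubic a b c r3 = 0].
Proof. by rewrite !cubic_Vieta_factor !subrr !(mul0r, mulr0). Qed.

Lemma cubic_Vieta_neq : [/\ r1 != r2, r1 != r3 & r2 != r3].
Proof.
have [p1 p2 _] := cubic_Vieta_roots.
split; [apply: (cubic_root_simple (t := r3)) | apply: (cubic_root_simple (t := r2))
       | apply: (cubic_root_simple (t := r1))]; rewrite // ?Va ?Vb; ring.
Qed.

Lemma uniq_sgr_cubic_roots :
  uniq [:: 1; Num.sg r1 * r1; Num.sg r2 * r2; Num.sg r3 * r3].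
Proof.
have [p1 p2 p3] := cubic_Vieta_roots; have [n12 n13 n23] := cubic_Vieta_neq.
rewrite /= !inE !negb_or ![1 == _]eq_sym !sgr_cubic_root_neq1 //.
by rewrite !sgr_cubic_roots_neq.
Qed.

Lemma cubic_Vieta_Crat_rel (e0 e1 e2 e3 : algC) :
  e0 \in Crat -> e1 \in Crat -> e2 \in Crat -> e3 \in Crat ->
  e0 + e1 * r1 + e2 * r2 + e3 * r3 = 0 -> [/\ e1 = e3, e2 = e3 & e0 = a * e3].
Proof.
move=> e0Q e1Q e2Q e3Q rel.
have [p1 p2 _] := cubic_Vieta_roots; have [n12 _ _] := cubic_Vieta_neq.
have rel12 : (e0 - a * e3) + (e1 - e3) * r1 + (e2 - e3) * r2 = 0.
  by rewrite -rel Va; ring.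
have [||| /subr0_eq e0E /subr0_eq e1E /subr0_eq e2E] :=
  cubic_roots_Crat_indep p1 p2 n12 _ _ _ rel12; rewrite ?rpredB ?rpredM //.
Qed.

Hypothesis a_neq0 : a != 0.

Lemma sgr_cubic_roots_rel (d : algC -> rat) (u0 : algC) :
  u0 \in [:: 1; Num.sg r1 * r1; Num.sg r2 * r2; Num.sg r3 * r3] -> d u0 = 0 ->
  \sum_(u <- [:: 1; Num.sg r1 * r1; Num.sg r2 * r2; Num.sg r3 * r3]) ratr (d u) * u = 0 ->
  {in [:: 1; Num.sg r1 * r1; Num.sg r2 * r2; Num.sg r3 * r3], forall u, d u = 0}.
Proof.
move=> u0U du0 rel; have [p1 p2 p3] := cubic_Vieta_roots.
have ratr_eq0 q : ratr q = 0 :> algC -> q = 0 by move/eqP; rewrite fmorph_eq0 => /eqP.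
pose e x := ratr (d (Num.sg x * x)) * Num.sg x.
have eQ x : e x \in Crat.
  by rewrite rpredM ?Crat_rat // sgr_def rpredMn // rpredX // rpredN rpred1.
have e_eq0 x : cubic a b c x = 0 -> e x = 0 -> d (Num.sg x * x) = 0.
  move=> px /eqP; rewrite mulf_eq0 sgr_eq0 (negbTE (cubic_root_neq0 px)) orbF.
  by move/eqP/ratr_eq0.
have [e1E e2E e0E] : [/\ e r1 = e r3, e r2 = e r3 & ratr (d 1) = a * e r3].
  apply: cubic_Vieta_Crat_rel; rewrite ?Crat_rat //.
  by rewrite -[RHS]rel !big_cons big_nil /e; ring.
have e3_0 : e r3 = 0.
  move: u0U du0; rewrite !inE => /or4P[] /eqP -> du0.
  - by apply: (mulfI a_neq0); rewrite mulr0 -e0E du0 rmorph0.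
  - by rewrite -e1E /e du0 rmorph0 mul0r.
  - by rewrite -e2E /e du0 rmorph0 mul0r.
  - by rewrite /e du0 rmorph0 mul0r.
move=> u; rewrite !inE => /or4P[] /eqP ->.
- by apply: ratr_eq0; rewrite e0E e3_0 mulr0.
- by apply: e_eq0; rewrite ?e1E.
- by apply: e_eq0; rewrite ?e2E.
- exact: e_eq0.
Qed.

End RationalCubic.

Lemma Q_lin_indep_subseq (U : seq algC) (P : pred algC) :
  uniq U -> {subset P <= U} ->
  (forall d : algC -> rat, (forall u, ~~ P u -> d u = 0) ->
     \sum_(u <- U) ratr (d u) * u = 0 -> forall u, P u -> d u = 0) ->
  Q_lin_indep P.
Proof.
move=> U_uniq PU U_rel s c s_uniq sP s_rel x xs.
pose d u := if u \in s then c u else 0.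
have d_out u : ~~ P u -> d u = 0 by rewrite /d; case: ifP => // /sP ->.
suff /(U_rel d d_out)/(_ x (sP x xs)) : \sum_(u <- U) ratr (d u) * u = 0.
  by rewrite /d xs.
transitivity (\sum_(u <- U | u \in s) ratr (c u) * u).
  rewrite [RHS]big_mkcond; apply: eq_bigr => u _.
  by rewrite /d; case: ifP; rewrite ?rmorph0 ?mul0r.
rewrite -big_filter -[RHS]s_rel; apply: perm_big; apply: uniq_perm; rewrite ?filter_uniq //.
move=> u; rewrite mem_filter; apply/andP/idP => [[] // | u_s].
by split; last exact: PU (sP u u_s).
Qed.

(** * Column sums of the adjacency matrix *)

Lemma big_nat_pred1 (R : nmodType) (F : nat -> R) n k0 : (k0 < n)%N ->
  \sum_(0 <= k < n | k == k0) F k = F k0.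
Proof.
move=> lt_k0n; rewrite -big_filter filter_pred1_uniq ?iota_uniq ?big_seq1 //.
by rewrite mem_index_iota.
Qed.

Lemma sum_pairs (R : nmodType) (F : nat -> R) m n :
  \sum_(m <= i < m + 2 * n) F i = \sum_(0 <= k < n) (F (m + 2 * k)%N + F (m + 2 * k).+1).
Proof.
elim: n => [|n IH]; first by rewrite muln0 addn0 !big_geq.
rewrite big_nat_recr //= -IH -addnS mulnS -[(2 + _)%N]/((2 * n).+2) addnS addnS.
by rewrite !big_nat_recr ?leq_addr ?leqW ?leq_addr //= addrA.
Qed.

Lemma sum_natr_weight (R : pzSemiRingType) (F : nat -> R) (t p : pred nat) n :
  (forall k, (k < n)%N -> t k = p k) ->
  \sum_(0 <= k < n) F k * (t k)%:R = \sum_(0 <= k < n | p k) F k.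
Proof.
move=> tp; rewrite [RHS]big_mkcond; apply: eq_big_nat => k /andP[_ lt_kn].
by rewrite tp //; case: (p k); rewrite ?mulr1 ?mulr0.
Qed.

Lemma sum_double_star (R : pzSemiRingType) (F : nat -> R) (T : nat -> bool) l
    (c0 c1 : bool) (a b a' b' : pred nat) :
  T 0%N = c0 -> T 1%N = c1 ->
  (forall k, (k < l)%N -> T (2 + 2 * k)%N = a k) ->
  (forall k, (k < l)%N -> T (3 + 2 * k)%N = b k) ->
  (forall k, (k < l)%N -> T (2 + 2 * l + 2 * k)%N = a' k) ->
  (forall k, (k < l)%N -> T (3 + 2 * l + 2 * k)%N = b' k) ->
  \sum_(0 <= i < 2 * l + 2 * l + 2) F i * (T i)%:R =
    F 0%N * c0%:R + F 1%N * c1%:R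
    + \sum_(0 <= k < l | a k) F (2 + 2 * k)%N + \sum_(0 <= k < l | b k) F (3 + 2 * k)%N
    + \sum_(0 <= k < l | a' k) F (2 + 2 * l + 2 * k)%N
    + \sum_(0 <= k < l | b' k) F (3 + 2 * l + 2 * k)%N.
Proof.
move=> <- <- ha hb ha' hb'.
have -> : (2 * l + 2 * l + 2 = (2 + 2 * l) + 2 * l)%N by lia.
rewrite (@big_cat_nat _ _ _ (2 + 2 * l)) ?leq_addr //.
rewrite (@big_cat_nat _ _ _ 2) ?leq_addr // !sum_pairs !big_split /=.
rewrite big_nat_recr // big_nat1 !addrA.
congr (_ + _ + _ + _ + _ + _); apply: sum_natr_weight => k lt_kl.
- exact: ha.
- exact: hb.
- exact: ha'.
- exact: hb'.
Qed.

Ltac tedge_lia := rewrite /tedge /tedge_dir ?(oddD, oddM) /=; lia.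

Section DoubleStarNeighbours.

Variables (l : nat) (F : nat -> algC).

Lemma sum_tedge_hub0 :
  \sum_(0 <= i < 2 * l + 2 * l + 2) F i * (tedge l l i 0)%:R
    = F 1%N + \sum_(0 <= k < l) F (2 + 2 * k)%N.
Proof.
rewrite (@sum_double_star _ F _ l false true xpredT xpred0 xpred0 xpred0);
  try by move=> *; tedge_lia.
by rewrite !big_pred0_eq mulr0 mulr1 add0r !addr0.
Qed.

Lemma sum_tedge_hub1 :
  \sum_(0 <= i < 2 * l + 2 * l + 2) F i * (tedge l l i 1)%:R
    = F 0%N + \sum_(0 <= k < l) F (2 + 2 * l + 2 * k)%N.
Proof.
rewrite (@sum_double_star _ F _ l true false xpred0 xpred0 xpredT xpred0);
  try by move=> *; tedge_lia.
by rewrite !big_pred0_eq mulr0 mulr1 !addr0.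
Qed.

Variables (k0 : nat) (lt_k0l : (k0 < l)%N).

Lemma sum_tedge_mid0 :
  \sum_(0 <= i < 2 * l + 2 * l + 2) F i * (tedge l l i (2 + 2 * k0))%:R
    = F 0%N + F (3 + 2 * k0)%N.
Proof.
rewrite (@sum_double_star _ F _ l true false xpred0 (xpred1 k0) xpred0 xpred0);
  try by move=> *; tedge_lia.
by rewrite !big_pred0_eq big_nat_pred1 // mulr0 mulr1 !addr0.
Qed.

Lemma sum_tedge_end0 :
  \sum_(0 <= i < 2 * l + 2 * l + 2) F i * (tedge l l i (3 + 2 * k0))%:R
    = F (2 + 2 * k0)%N.
Proof.
rewrite (@sum_double_star _ F _ l false false (xpred1 k0) xpred0 xpred0 xpred0);
  try by move=> *; tedge_lia.
by rewrite !big_pred0_eq big_nat_pred1 // !mulr0 !add0r !addr0.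
Qed.

Lemma sum_tedge_mid1 :
  \sum_(0 <= i < 2 * l + 2 * l + 2) F i * (tedge l l i (2 + 2 * l + 2 * k0))%:R
    = F 1%N + F (3 + 2 * l + 2 * k0)%N.
Proof.
rewrite (@sum_double_star _ F _ l false true xpred0 xpred0 xpred0 (xpred1 k0));
  try by move=> *; tedge_lia.
by rewrite !big_pred0_eq big_nat_pred1 // mulr0 mulr1 add0r !addr0.
Qed.

Lemma sum_tedge_end1 :
  \sum_(0 <= i < 2 * l + 2 * l + 2) F i * (tedge l l i (3 + 2 * l + 2 * k0))%:R
    = F (2 + 2 * l + 2 * k0)%N.
Proof.
rewrite (@sum_double_star _ F _ l false false xpred0 xpred0 (xpred1 k0) xpred0);
  try by move=> *; tedge_lia.
by rewrite !big_pred0_eq big_nat_pred1 // !mulr0 !add0r !addr0.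
Qed.

End DoubleStarNeighbours.

(** * Eigenvalues of T_{l,l} *)

Definition dstar_cubic (l : nat) (x : algC) : algC := cubic (-1) (- (l.+1)%:R) 1 x.

Lemma arm_end_eq (x h m e : algC) : h + e = x * m -> m = x * e -> (x ^+ 2 - 1) * e = h.
Proof. by move=> hm me; rewrite -[h](addrK e) hm me; ring. Qed.

Lemma star_hub_eq (l : nat) (x h h' : algC) (m e : nat -> algC) :
  h' + \sum_(0 <= k < l) m k = x * h ->
  (forall k, (k < l)%N -> h + e k = x * m k) ->
  (forall k, (k < l)%N -> m k = x * e k) ->
  (x ^+ 2 - 1) * h' + l%:R * x * h = (x ^+ 2 - 1) * x * h.
Proof.
move=> hub midE endE.
have arm_sum : (x ^+ 2 - 1) * \sum_(0 <= k < l) m k = l%:R * x * h.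
  rewrite mulr_sumr (eq_big_nat _ _ (F2 := fun _ => x * h)) => [|k /andP[_ lt_kl]].
    by rewrite sumr_const_nat subn0 -mulr_natl; ring.
  by rewrite endE // -(arm_end_eq (midE k lt_kl) (endE k lt_kl)); ring.
by rewrite -arm_sum -mulrDr hub mulrA.
Qed.

Lemma double_star_hubs (l : nat) (x h0 h1 : algC) :
  (x ^+ 2 - 1) * h1 + l%:R * x * h0 = (x ^+ 2 - 1) * x * h0 ->
  (x ^+ 2 - 1) * h0 + l%:R * x * h1 = (x ^+ 2 - 1) * x * h1 ->
  (h0 + h1) * dstar_cubic l x = 0 /\ (h0 - h1) * dstar_cubic l (- x) = 0.
Proof.
move=> hub0 hub1; split.
- transitivity (((x ^+ 2 - 1) * x * h0 - ((x ^+ 2 - 1) * h1 + l%:R * x * h0))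
                + ((x ^+ 2 - 1) * x * h1 - ((x ^+ 2 - 1) * h0 + l%:R * x * h1))).
    by rewrite /dstar_cubic /cubic; ring.
  by rewrite hub0 hub1 !subrr addr0.
- transitivity (((x ^+ 2 - 1) * x * h1 - ((x ^+ 2 - 1) * h0 + l%:R * x * h1))
                - ((x ^+ 2 - 1) * x * h0 - ((x ^+ 2 - 1) * h1 + l%:R * x * h0))).
    by rewrite /dstar_cubic /cubic; ring.
  by rewrite hub0 hub1 !subrr.
Qed.

Lemma double_star_index_cases l j : (j < 2 * l + 2 * l + 2)%N ->
  [\/ j = 0%N, j = 1%N | exists2 k, (k < l)%N &
     [\/ j = 2 + 2 * k, j = 3 + 2 * k, j = 2 + 2 * l + 2 * k | j = 3 + 2 * l + 2 * k]%N].
Proof.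
move=> lt_j; case: (ltnP j 2) => [|le2j].
  by case: j lt_j => [|[|]] // _ _; [constructor 1 | constructor 2].
constructor 3; have [lt_j_arm0 | le_arm0_j] := ltnP j (2 + 2 * l).
  exists ((j - 2) %/ 2)%N; first by lia.
  by case: (boolP (odd j)) => odd_j; [constructor 2 | constructor 1]; lia.
exists ((j - 2 - 2 * l) %/ 2)%N; first by lia.
by case: (boolP (odd j)) => odd_j; [constructor 4 | constructor 3]; lia.
Qed.

Section DoubleStarEigenvector.

Variables (l : nat) (x : algC) (g : nat -> algC).
Hypothesis hub0 : g 1%N + \sum_(0 <= k < l) g (2 + 2 * k)%N = x * g 0%N.
Hypothesis hub1 : g 0%N + \sum_(0 <= k < l) g (2 + 2 * l + 2 * k)%N = x * g 1%N.
Hypothesis mid0 : forall k, (k < l)%N -> g 0%N + g (3 + 2 * k)%N = x * g (2 + 2 * k)%N.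
Hypothesis end0 : forall k, (k < l)%N -> g (2 + 2 * k)%N = x * g (3 + 2 * k)%N.
Hypothesis mid1 : forall k, (k < l)%N ->
  g 1%N + g (3 + 2 * l + 2 * k)%N = x * g (2 + 2 * l + 2 * k)%N.
Hypothesis end1 : forall k, (k < l)%N ->
  g (2 + 2 * l + 2 * k)%N = x * g (3 + 2 * l + 2 * k)%N.

Lemma double_star_eigenvector_eq0 :
  (x ^+ 2 - 1) * dstar_cubic l x * dstar_cubic l (- x) != 0 ->
  forall j, (j < 2 * l + 2 * l + 2)%N -> g j = 0.
Proof.
rewrite !mulf_eq0 !negb_or => /andP[/andP[x2_neq0 px_neq0] pNx_neq0].
have [/eqP sum_hubs /eqP diff_hubs] := double_star_hubs
  (@star_hub_eq l x _ _ (fun k => g (2 + 2 * k)%N) _ hub0 mid0 end0)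
  (@star_hub_eq l x _ _ (fun k => g (2 + 2 * l + 2 * k)%N) _ hub1 mid1 end1).
move: sum_hubs diff_hubs; rewrite !mulf_eq0 (negbTE px_neq0) (negbTE pNx_neq0) !orbF.
move=> /eqP sum_hubs /eqP/subr0_eq g1E; rewrite -g1E -mulr2n in sum_hubs.
have g0 : g 0%N = 0 by apply/eqP; move: sum_hubs => /eqP; rewrite mulrn_eq0.
have g1 : g 1%N = 0 by rewrite -g1E.
have leaf0 k : (k < l)%N -> g (3 + 2 * k)%N = 0.
  move=> lt_kl; have := arm_end_eq (mid0 lt_kl) (end0 lt_kl).
  by rewrite g0 => /eqP; rewrite mulf_eq0 (negbTE x2_neq0) => /eqP.
have leaf1 k : (k < l)%N -> g (3 + 2 * l + 2 * k)%N = 0.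
  move=> lt_kl; have := arm_end_eq (mid1 lt_kl) (end1 lt_kl).
  by rewrite g1 => /eqP; rewrite mulf_eq0 (negbTE x2_neq0) => /eqP.
move=> j /double_star_index_cases [->|->|[k lt_kl [->|->|->|->]]] //.
- by rewrite end0 // leaf0 // mulr0.
- exact: leaf0.
- by rewrite end1 // leaf1 // mulr0.
- exact: leaf1.
Qed.

End DoubleStarEigenvector.

Lemma Tadj_eigenvalue_root l x : eigenvalue (Tadj l l) x ->
  (x ^+ 2 - 1) * dstar_cubic l x * dstar_cubic l (- x) = 0.
Proof.
case/eigenvalueP => v vA v_neq0; apply/eqP; apply: contraTT v_neq0 => x_nonroot.
rewrite negbK; pose n := (2 * l + 2 * l + 2)%N.
pose g i := odflt 0 (omap (v 0) (insub i : option 'I_n)).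
have gE (i : 'I_n) : g i = v 0 i by rewrite /g valK.
have col J : (J < n)%N -> \sum_(0 <= i < n) g i * (tedge l l i J)%:R = x * g J.
  move=> lt_Jn; have -> : g J = v 0 (Ordinal lt_Jn) := gE (Ordinal lt_Jn).
  have := congr1 (fun M : 'rV_n => M 0 (Ordinal lt_Jn)) vA; rewrite /= !mxE => <-.
  by rewrite big_mkord; apply: eq_bigr => i _; rewrite gE mxE.
apply/eqP/rowP => j; rewrite mxE -gE.
apply: (double_star_eigenvector_eq0 _ _ _ _ _ _ x_nonroot (ltn_ord j)).
- by rewrite -sum_tedge_hub0 col // /n; lia.
- by rewrite -sum_tedge_hub1 col // /n; lia.
- by move=> k lt_kl; rewrite -(sum_tedge_mid0 _ lt_kl) col // /n; lia.
- by move=> k lt_kl; rewrite -(sum_tedge_end0 _ lt_kl) col // /n; lia.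
- by move=> k lt_kl; rewrite -(sum_tedge_mid1 _ lt_kl) col // /n; lia.
- by move=> k lt_kl; rewrite -(sum_tedge_end1 _ lt_kl) col // /n; lia.
Qed.

Lemma dstar_cubic_no_Crat_root l : (0 < l)%N ->
  forall t, t \in Crat -> dstar_cubic l t != 0.
Proof.
move=> l_gt0 t tQ; apply/eqP => pt.
pose P : {poly algC} := Poly [:: 1; - (l.+1)%:R; -1; 1].
have rootP : root P t.
  by apply/eqP; rewrite horner_Poly /= -[RHS]pt /dstar_cubic /cubic; ring.
have monicP : P \is monic by rewrite monicE /lead_coef /P (@PolyK _ 1) //= oner_neq0.
have intP : P \is a polyOver Num.int.
  apply/polyOverP => i; rewrite coef_Poly.
  by case: i => [|[|[|[|i]]]] /=; rewrite ?rpredN ?natr_int ?rpred1 ?nth_nil ?rpred0.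
have /intrP[m tE] := Cint_rat_Aint tQ (root_monic_Aint rootP monicP intP).
have mroot : m ^+ 3 - m ^+ 2 - (l.+1)%:Z * m + 1 = 0.
  apply/eqP; rewrite -(intr_eq0 algC) -pt tE /dstar_cubic /cubic.
  by rewrite !rmorphD !rmorphN /= !rmorphXn rmorphM /= rmorph1 pmulrn; apply/eqP; ring.
have : (m %| 1)%Z.
  apply/dvdzP; exists (- (m ^+ 2 - m - (l.+1)%:Z)).
  by apply/eqP; rewrite -subr_eq0 -mroot; apply/eqP; ring.
rewrite dvdz1 => /eqP m_unit.
have [|] : m = 1 \/ m = -1 by case: m m_unit {tE mroot} => n /= => [->|[->]]; [left|right].
all: by move=> mE; move: mroot; rewrite mE; lia.
Qed.

Lemma pos_eigenvalue_Tadj_sgr_roots l (r1 r2 r3 : algC) :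
  -1 = - (r1 + r2 + r3) -> - (l.+1)%:R = r1 * r2 + r1 * r3 + r2 * r3 ->
  1 = - (r1 * r2 * r3) ->
  {subset pos_eigenvalue (Tadj l l) <=
          [:: 1; Num.sg r1 * r1; Num.sg r2 * r2; Num.sg r3 * r3]}.
Proof.
move=> Va Vb Vc y /andP[/Tadj_eigenvalue_root/eqP y_root y_gt0].
have sgr_y : Num.sg y * y = y by rewrite gtr0_sg // mul1r.
have sgrN_y : Num.sg (- y) * - y = y by rewrite ltr0_sg ?oppr_lt0 // mulN1r opprK.
move: y_root; rewrite /dstar_cubic !(cubic_Vieta_factor Va Vb Vc) !mulf_eq0 !subr_eq0.
rewrite sqrf_eq1 !inE -!orbA => /orP[/eqP-> | /orP[/eqP yN1 | ]]; first by rewrite eqxx.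
  by move: y_gt0; rewrite yN1 ltr0N1.
by move=> /orP[|/orP[|/orP[|/orP[|/orP[]]]]] /eqP <-; rewrite ?sgr_y ?sgrN_y eqxx ?orbT.
Qed.

Theorem corollary2p3 (l : nat) (hl : (0 < l)%N) (a0 : algC) :
  pos_eigenvalue (Tadj l l) a0 ->
  Q_lin_indep (fun x => pos_eigenvalue (Tadj l l) x && (x != a0)).
Proof.
move=> a0_pos.
have [r1 [r2 [r3 [Va Vb Vc]]]] := cubic_Vieta (-1 : algC) (- (l.+1)%:R) 1.
have aQ : (-1 : algC) \in Crat by rewrite rpredN rpred1.
have bQ : - (l.+1)%:R \in Crat by rewrite rpredN rpred_nat.
have cQ : (1 : algC) \in Crat by rewrite rpred1.
have no_root := dstar_cubic_no_Crat_root hl.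
have posU := pos_eigenvalue_Tadj_sgr_roots Va Vb Vc.
apply: (Q_lin_indep_subseq (uniq_sgr_cubic_roots aQ bQ cQ no_root Va Vb Vc)).
  by move=> x /andP[/posU].
move=> d d_out U_rel u /andP[/posU uU _].
have da0 : d a0 = 0 by apply: d_out; rewrite eqxx andbF.
by apply: (sgr_cubic_roots_rel aQ bQ cQ no_root Va Vb Vc _ (posU _ a0_pos) da0 U_rel);
  rewrite ?oppr_eq0 ?oner_eq0.
Qed.
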